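(* Fix an aggregator $f:[0,1]^2\to[0,1]$ and a two-signal structure $\theta=(\mu,\alpha_1,\beta_1,\alpha_2,\beta_2)\in\Theta_4$. Define for $\lambda\in(0,1]$ $$u(\lambda)=\Big(1+\big(\tfrac{1-\mu}{\mu}\big)^{1/\lambda}\Big)^{-1},\qquad t_\theta(\lambda)=(u(\lambda),\alpha_1,\beta_1,\alpha_2,\beta_2)\in\Theta_4,$$ and $$\phi_\theta(\lambda)=\mathbb E_{t_\theta(\lambda)}\big[L(f(\mathbf x(\mathbf s,\lambda)),\omega)-L(f^*(\mathbf s),\omega)\big],$$ where the expert reports $\mathbf x(\mathbf s,\lambda)$ and the benchmark $f^*$ are computed with respect to the structure $t_\theta(\lambda)$. Then $\phi_\theta$ is single-troughed on $(0,1]$: it is either monotone, or first monotonically non-increasing and then monotonically non-decreasing.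
   Context: Setting: binary state $\omega\in\{0,1\}$, two experts. $\Theta_4$ is the set of conditionally independent two-signal structures, written as quintuples $(\mu,\alpha_1,\beta_1,\alpha_2,\beta_2)$: signal spaces $\mathcal S_1=\mathcal S_2=\{r,b\}$, $\mu=\Pr[\omega=1]\in(0,1)$, $\alpha_i=\Pr[S_i=r\mid\omega=1]$, $\beta_i=\Pr[S_i=r\mid\omega=0]$, with $S_1,S_2$ conditionally independent given $\omega$. For a structure with prior $\mu'$ and degree $\lambda\in(0,1]$, expert $i$ with signal $s_i$ reports $x_i(s_i,\lambda)=\frac{\mu'^\lambda\Pr[S_i=s_i\mid\omega=1]}{\mu'^\lambda\Pr[S_i=s_i\mid\omega=1]+(1-\mu')^\lambda\Pr[S_i=s_i\mid\omega=0]}$, and $\mathbf x(\mathbf s,\lambda)=(x_1(s_1,\lambda),x_2(s_2,\lambda))$. $f^*(\mathbf s)=\Pr[\omega=1\mid S_1=s_1,S_2=s_2]$ under the structure in question. The loss is $L(y,\omega)=(y-\omega)^2$. *)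

From Stdlib Require Import Reals.
Open Scope R_scope.

(* Signals: true = r, false = b.  States: true = (omega = 1), false = (omega = 0). *)

(* Pr[S_i = s | omega = w] for expert i with parameters (alpha_i, beta_i). *)
Definition sprob (a b : R) (w s : bool) : R :=
  if w then (if s then a else 1 - a) else (if s then b else 1 - b).

Definition pprob (mu : R) (w : bool) : R := if w then mu else 1 - mu.

Definition report (mu' lam a b : R) (s : bool) : R :=
  Rpower mu' lam * sprob a b true s /
  (Rpower mu' lam * sprob a b true s + Rpower (1 - mu') lam * sprob a b false s).

(* Bayesian benchmark f*(s) = Pr[omega = 1 | S_1 = s1, S_2 = s2]
   (conditionally independent signals). *)
Definition fstar (mu a1 b1 a2 b2 : R) (s1 s2 : bool) : R :=
  mu * sprob a1 b1 true s1 * sprob a2 b2 true s2 /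
  (mu * sprob a1 b1 true s1 * sprob a2 b2 true s2
   + (1 - mu) * sprob a1 b1 false s1 * sprob a2 b2 false s2).

Definition sqloss (y : R) (w : bool) : R := (y - (if w then 1 else 0)) ^ 2.

Definition bsum (g : bool -> R) : R := g true + g false.

Definition u_map (mu lam : R) : R := / (1 + Rpower ((1 - mu) / mu) (1 / lam)).

Definition phi (f : R -> R -> R) (mu a1 b1 a2 b2 : R) (lam : R) : R :=
  let m := u_map mu lam in
  bsum (fun w => bsum (fun s1 => bsum (fun s2 =>
    pprob m w * sprob a1 b1 w s1 * sprob a2 b2 w s2 *
    (sqloss (f (report m lam a1 b1 s1) (report m lam a2 b2 s2)) w
     - sqloss (fstar m a1 b1 a2 b2 s1 s2) w)))).

Definition nonincr_on (P : R -> Prop) (g : R -> R) : Prop :=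
  forall x y, P x -> P y -> x <= y -> g y <= g x.
Definition nondecr_on (P : R -> Prop) (g : R -> R) : Prop :=
  forall x y, P x -> P y -> x <= y -> g x <= g y.

Definition single_troughed_0_1 (g : R -> R) : Prop :=
  nonincr_on (fun x => 0 < x <= 1) g \/
  nondecr_on (fun x => 0 < x <= 1) g \/
  exists c, 0 < c <= 1 /\
    nonincr_on (fun x => 0 < x <= c) g /\ nondecr_on (fun x => c <= x <= 1) g.

From Stdlib Require Import Reals Lra Classical.
From Coquelicot Require Import Coquelicot.
Open Scope R_scope.

(* Under t(lambda) the lambda-distorted reports coincide with the Bayesian
   posteriors under the original prior mu, so phi(lambda) = G(u(lambda)), where
   G(m) is the expected excess loss when only the prior m varies.  Each signal
   pair contributes a quadratic-over-linear function of m, so G is convex on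
   (0,1); since u is monotone and continuous, phi is quasiconvex and continuous
   on (0,1].  Such a function is single-troughed, with the trough at the
   supremum of the points not preceded by a strictly smaller value. *)

Lemma le_of_continuous_approx (g : R -> R) (c K : R) :
  continuous g c ->
  (forall d, 0 < d -> exists x, Rabs (x - c) < d /\ g x <= K) -> g c <= K.
Proof.
  intros Hc Happ. apply Rnot_lt_le; intro HK.
  apply continuity_pt_filterlim in Hc. rewrite continuity_pt_locally in Hc.
  destruct (Hc (mkposreal (g c - K) ltac:(lra))) as [d Hd].
  destruct (Happ d (cond_pos d)) as [x [Hx HxK]].
  specialize (Hd x Hx). apply Rabs_def2 in Hd. simpl in Hd. lra.
Qed.

Section SingleTrough.

Variable g : R -> R.

Definition rising (q : R) : Prop := exists p, 0 < p < q /\ g p < g q.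

Lemma nonincr_to_nonrising x y : 0 < x <= y -> ~ rising y -> g y <= g x.
Proof.
  intros Hxy Hy. apply Rnot_lt_le; intro Hlt.
  destruct (Req_dec x y) as [->|Hne]; [lra|].
  apply Hy; exists x; split; [lra|exact Hlt].
Qed.

Hypothesis g_quasiconvex :
  forall x y z, 0 < x -> x < y -> y < z -> z <= 1 -> g y <= Rmax (g x) (g z).

Lemma nondecr_from_rising y z : rising y -> y <= z <= 1 -> g y <= g z.
Proof.
  intros [p [Hp Hpy]] Hz.
  destruct (Req_dec y z) as [->|Hne]; [lra|].
  assert (Hq := g_quasiconvex p y z ltac:(lra) ltac:(lra) ltac:(lra) ltac:(lra)).
  destruct (proj1 (Rmax_Rle _ _ _) Hq); lra.
Qed.

Lemma rising_le q y : rising q -> q <= y <= 1 -> rising y.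
Proof.
  intros Hq Hy. assert (Hle := nondecr_from_rising q y Hq Hy).
  destruct Hq as [p [Hp Hpq]]. exists p; split; lra.
Qed.

Hypothesis g_continuous : forall c, 0 < c <= 1 -> continuous g c.

Theorem single_troughed_of_quasiconvex_continuous : single_troughed_0_1 g.
Proof.
  right. set (N := fun x => 0 < x <= 1 /\ ~ rising x).
  destruct (classic (exists x, N x)) as [HN | HN].
  2:{ left. intros x y Hx Hy Hxy. apply nondecr_from_rising; [|lra].
      apply NNPP; intro Hx'. apply HN. exists x. split; [lra|exact Hx']. }
  right.
  assert (HNb : bound N) by (exists 1; intros x Hx; apply Hx).
  destruct (completeness N HNb HN) as [c [Hub Hlub]].
  assert (c_pos : 0 < c) by (destruct HN as [x0 Hx0]; specialize (Hub x0 Hx0); destruct Hx0; lra).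
  assert (c_le1 : c <= 1) by (apply Hlub; intros x Hx; apply Hx).
  assert (below : forall x, 0 < x < c -> ~ rising x).
  { intros x Hx Hrx. enough (c <= x) by lra. apply Hlub. intros n [Hn Hnr].
    apply Rnot_lt_le; intro Hxn. apply Hnr, (rising_le x); [exact Hrx|lra]. }
  assert (above : forall y, c < y <= 1 -> rising y).
  { intros y Hy. apply NNPP; intro Hry. enough (y <= c) by lra. apply Hub. split; [lra|exact Hry]. }
  assert (not_rising_c : ~ rising c).
  { intros [p [Hp Hpc]]. apply (Rlt_not_le _ _ Hpc).
    apply (le_of_continuous_approx g c); [apply g_continuous; lra|].
    intros d Hd. exists (Rmax p (c - d / 2)).
    unfold Rmax; destruct (Rle_dec p (c - d / 2)).
    - split; [apply Rabs_def1; lra|]. apply nonincr_to_nonrising; [lra|apply below; lra].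
    - split; [apply Rabs_def1; lra|lra]. }
  exists c. split; [lra|split].
  - intros x y Hx Hy Hxy. apply nonincr_to_nonrising; [lra|].
    destruct (Req_dec y c) as [->|Hyc]; [exact not_rising_c|apply below; lra].
  - intros x y Hx Hy Hxy. destruct (Req_dec x c) as [->|Hxc].
    + destruct (Req_dec y c) as [->|Hyc]; [lra|].
      apply (le_of_continuous_approx g c); [apply g_continuous; lra|].
      intros d Hd. exists (Rmin y (c + d / 2)).
      unfold Rmin; destruct (Rle_dec y (c + d / 2)).
      * split; [apply Rabs_def1; lra|lra].
      * split; [apply Rabs_def1; lra|]. apply nondecr_from_rising; [apply above|]; lra.
    + apply nondecr_from_rising; [apply above|]; lra.
Qed.

End SingleTrough.

Definition convex_01 (G : R -> R) : Prop :=
  forall x z t, 0 < x < 1 -> 0 < z < 1 -> 0 <= t <= 1 ->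
  G (t * x + (1 - t) * z) <= t * G x + (1 - t) * G z.

Lemma convex_bsum (G : bool -> R -> R) :
  (forall b, convex_01 (G b)) -> convex_01 (fun m => bsum (fun b => G b m)).
Proof.
  intros HG x z t Hx Hz Ht. unfold bsum.
  assert (H1 := HG true x z t Hx Hz Ht). assert (H2 := HG false x z t Hx Hz Ht). lra.
Qed.

Lemma convex_le_Rmax (G : R -> R) m1 m m2 :
  convex_01 G -> 0 < m1 -> m2 < 1 -> m1 <= m <= m2 -> G m <= Rmax (G m1) (G m2).
Proof.
  intros HG H1 H2 Hm.
  assert (Hl := Rmax_l (G m1) (G m2)). assert (Hr := Rmax_r (G m1) (G m2)).
  destruct (Req_dec m1 m2) as [<-|Hne]; [replace m with m1 by lra; lra|].
  set (t := (m2 - m) / (m2 - m1)).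
  assert (Ht : 0 <= t <= 1).
  { unfold t. split.
    - apply Rdiv_le_0_compat; lra.
    - apply Rmult_le_reg_r with (m2 - m1); [lra|]. field_simplify; lra. }
  replace m with (t * m1 + (1 - t) * m2) by (unfold t; field; lra).
  assert (HG' := HG m1 m2 t ltac:(lra) ltac:(lra) Ht). nra.
Qed.

Lemma sqr_div_joint_convex L1 L2 D1 D2 t :
  0 < D1 -> 0 < D2 -> 0 <= t <= 1 ->
  (t * L1 + (1 - t) * L2) ^ 2 / (t * D1 + (1 - t) * D2)
  <= t * (L1 ^ 2 / D1) + (1 - t) * (L2 ^ 2 / D2).
Proof.
  intros H1 H2 Ht.
  assert (HD : 0 < t * D1 + (1 - t) * D2) by nra.
  enough (0 <= t * (1 - t) * (L1 * D2 - L2 * D1) ^ 2 / (D1 * D2 * (t * D1 + (1 - t) * D2))).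
  { replace (t * (1 - t) * (L1 * D2 - L2 * D1) ^ 2 / (D1 * D2 * (t * D1 + (1 - t) * D2)))
      with (t * (L1 ^ 2 / D1) + (1 - t) * (L2 ^ 2 / D2)
            - (t * L1 + (1 - t) * L2) ^ 2 / (t * D1 + (1 - t) * D2)) in H by (field; lra).
    lra. }
  apply Rdiv_le_0_compat; [|apply Rmult_lt_0_compat; [nra|lra]].
  apply Rmult_le_pos; [nra|apply pow2_ge_0].
Qed.

(* With D = mA + (1-m)B, this is D (y - mA/D)^2: the excess square loss of the
   report y over the posterior mA/D, weighted by the probability D of the signal pair. *)
Definition pair_regret (A B y m : R) : R :=
  (y * (m * A + (1 - m) * B) - m * A) ^ 2 / (m * A + (1 - m) * B).

Lemma pair_mass_pos A B m :
  0 <= A -> 0 <= B -> ~ (A = 0 /\ B = 0) -> 0 < m < 1 -> 0 < m * A + (1 - m) * B.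
Proof.
  intros HA HB HAB Hm.
  destruct (Req_dec A 0) as [->|HA0]; [|nra].
  assert (B <> 0) by tauto. nra.
Qed.

Lemma pair_regret_0 y m : pair_regret 0 0 y m = 0.
Proof. unfold pair_regret. rewrite !Rmult_0_r, Rplus_0_r. unfold Rdiv. rewrite Rinv_0. ring. Qed.

Lemma pair_regret_convex A B y : 0 <= A -> 0 <= B -> convex_01 (pair_regret A B y).
Proof.
  intros HA HB x z t Hx Hz Ht.
  destruct (classic (A = 0 /\ B = 0)) as [[-> ->]|HAB]; [rewrite !pair_regret_0; lra|].
  unfold pair_regret.
  replace ((t * x + (1 - t) * z) * A + (1 - (t * x + (1 - t) * z)) * B)
    with (t * (x * A + (1 - x) * B) + (1 - t) * (z * A + (1 - z) * B)) by ring.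
  replace (y * (t * (x * A + (1 - x) * B) + (1 - t) * (z * A + (1 - z) * B))
           - (t * x + (1 - t) * z) * A)
    with (t * (y * (x * A + (1 - x) * B) - x * A) + (1 - t) * (y * (z * A + (1 - z) * B) - z * A))
    by ring.
  apply sqr_div_joint_convex; [apply pair_mass_pos..|]; assumption.
Qed.

Lemma pair_regret_continuous A B y m :
  0 <= A -> 0 <= B -> 0 < m < 1 -> continuous (pair_regret A B y) m.
Proof.
  intros HA HB Hm.
  destruct (classic (A = 0 /\ B = 0)) as [[-> ->]|HAB].
  - apply continuous_ext with (fun _ => 0); [intros; symmetry; apply pair_regret_0|].
    apply continuous_const.
  - assert (HD := pair_mass_pos A B m HA HB HAB Hm).
    apply (ex_derive_continuous (pair_regret A B y)). unfold pair_regret. auto_derive. lra.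
Qed.

Lemma u_map_range mu l : 0 < u_map mu l < 1.
Proof.
  unfold u_map. assert (HE : 0 < Rpower ((1 - mu) / mu) (1 / l)) by apply exp_pos.
  set (E := Rpower ((1 - mu) / mu) (1 / l)) in *.
  split; [apply Rinv_0_lt_compat; lra|].
  apply (Rmult_lt_reg_l (1 + E)); [lra|]. rewrite Rinv_r; lra.
Qed.

Lemma u_map_monotone mu :
  (forall x y, 0 < x -> x <= y -> u_map mu x <= u_map mu y) \/
  (forall x y, 0 < x -> x <= y -> u_map mu y <= u_map mu x).
Proof.
  assert (exp_le : forall a b, a <= b -> exp a <= exp b).
  { intros a b [Hab | ->]; [left; apply exp_increasing, Hab|lra]. }
  assert (inv_le : forall x y, 0 < x -> x <= y -> 1 / y <= 1 / x).
  { intros x y Hx Hxy. unfold Rdiv. rewrite !Rmult_1_l. apply Rinv_le_contravar; lra. }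
  assert (u_le : forall x y, 1 / y * ln ((1 - mu) / mu) <= 1 / x * ln ((1 - mu) / mu) ->
            u_map mu x <= u_map mu y).
  { intros x y Hxy. unfold u_map, Rpower. apply Rinv_le_contravar.
    - assert (0 < exp (1 / y * ln ((1 - mu) / mu))) by apply exp_pos. lra.
    - apply Rplus_le_compat_l, exp_le, Hxy. }
  destruct (Rle_or_lt 0 (ln ((1 - mu) / mu))) as [Hk|Hk]; [left|right];
    intros x y Hx Hxy; apply u_le; assert (Hinv := inv_le x y Hx Hxy); nra.
Qed.

Lemma u_map_continuous mu c : 0 < c -> continuous (u_map mu) c.
Proof.
  intros Hc. apply (ex_derive_continuous (u_map mu)). unfold u_map, Rpower. auto_derive.
  assert (0 < exp (1 / c * ln ((1 - mu) / mu))) by apply exp_pos. repeat split; lra.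
Qed.

Definition posterior (mu a b : R) (s : bool) : R :=
  mu * sprob a b true s / (mu * sprob a b true s + (1 - mu) * sprob a b false s).

(* The prior u(l) exactly compensates the degree l: (u/(1-u))^l = mu/(1-mu). *)
Lemma report_u_map mu l a b s :
  0 < mu < 1 -> 0 < l -> report (u_map mu l) l a b s = posterior mu a b s.
Proof.
  intros Hmu Hl. unfold report, posterior.
  set (r := (1 - mu) / mu). assert (Hr : 0 < r) by (apply Rdiv_lt_0_compat; lra).
  assert (Hm := u_map_range mu l). set (m := u_map mu l) in *.
  assert (HE : 0 < Rpower r (1 / l)) by apply exp_pos.
  assert (Hratio : 1 - m = m * Rpower r (1 / l)) by (unfold m, u_map; fold r; field; lra).
  rewrite Hratio, <- Rpower_mult_distr, Rpower_mult by lra.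
  replace (1 / l * l) with 1 by (field; lra). rewrite Rpower_1 by exact Hr.
  assert (HP : 0 < Rpower m l) by apply exp_pos.
  replace (Rpower m l * sprob a b true s + Rpower m l * r * sprob a b false s)
    with (Rpower m l * (sprob a b true s + r * sprob a b false s)) by ring.
  replace (mu * sprob a b true s + (1 - mu) * sprob a b false s)
    with (mu * (sprob a b true s + r * sprob a b false s)) by (unfold r; field; lra).
  rewrite !Rdiv_mult_l_l; lra.
Qed.

Lemma sprob_nonneg a b w s : 0 <= a <= 1 -> 0 <= b <= 1 -> 0 <= sprob a b w s.
Proof. intros Ha Hb. destruct w, s; simpl; lra. Qed.

Lemma excess_loss_pair m a1 b1 a2 b2 s1 s2 y :
  0 < m < 1 -> 0 <= a1 <= 1 -> 0 <= b1 <= 1 -> 0 <= a2 <= 1 -> 0 <= b2 <= 1 ->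
  bsum (fun w => pprob m w * sprob a1 b1 w s1 * sprob a2 b2 w s2 *
                 (sqloss y w - sqloss (fstar m a1 b1 a2 b2 s1 s2) w))
  = pair_regret (sprob a1 b1 true s1 * sprob a2 b2 true s2)
                (sprob a1 b1 false s1 * sprob a2 b2 false s2) y m.
Proof.
  intros Hm Ha1 Hb1 Ha2 Hb2.
  assert (HA1 := sprob_nonneg a1 b1 true s1 Ha1 Hb1).
  assert (HB1 := sprob_nonneg a1 b1 false s1 Ha1 Hb1).
  assert (HA2 := sprob_nonneg a2 b2 true s2 Ha2 Hb2).
  assert (HB2 := sprob_nonneg a2 b2 false s2 Ha2 Hb2).
  unfold bsum, pprob, sqloss, fstar, pair_regret.
  set (A1 := sprob a1 b1 true s1) in *. set (B1 := sprob a1 b1 false s1) in *.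
  set (A2 := sprob a2 b2 true s2) in *. set (B2 := sprob a2 b2 false s2) in *.
  assert (P1 : 0 <= m * A1 * A2) by (apply Rmult_le_pos; [apply Rmult_le_pos|]; lra).
  assert (P2 : 0 <= (1 - m) * B1 * B2) by (apply Rmult_le_pos; [apply Rmult_le_pos|]; lra).
  replace (m * (A1 * A2) + (1 - m) * (B1 * B2)) with (m * A1 * A2 + (1 - m) * B1 * B2) by ring.
  destruct (Req_dec (m * A1 * A2 + (1 - m) * B1 * B2) 0) as [HD|HD].
  - assert (Z1 : m * A1 * A2 = 0) by lra. assert (Z2 : (1 - m) * B1 * B2 = 0) by lra.
    rewrite HD. unfold Rdiv. rewrite Rinv_0, !Rmult_0_r.
    replace (m * (A1 * A2)) with (m * A1 * A2) by ring. rewrite Z1, Z2. ring.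
  - field. exact HD.
Qed.

Definition regret_at_prior (f : R -> R -> R) (mu a1 b1 a2 b2 m : R) : R :=
  bsum (fun s1 => bsum (fun s2 =>
    pair_regret (sprob a1 b1 true s1 * sprob a2 b2 true s2)
                (sprob a1 b1 false s1 * sprob a2 b2 false s2)
                (f (posterior mu a1 b1 s1) (posterior mu a2 b2 s2)) m)).

Lemma phi_u_map f mu a1 b1 a2 b2 l :
  0 < mu < 1 -> 0 < l ->
  0 <= a1 <= 1 -> 0 <= b1 <= 1 -> 0 <= a2 <= 1 -> 0 <= b2 <= 1 ->
  phi f mu a1 b1 a2 b2 l = regret_at_prior f mu a1 b1 a2 b2 (u_map mu l).
Proof.
  intros Hmu Hl Ha1 Hb1 Ha2 Hb2.
  assert (Hm := u_map_range mu l).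
  unfold phi, regret_at_prior, bsum. cbv zeta.
  rewrite !report_u_map by lra.
  rewrite <- !excess_loss_pair by lra.
  unfold bsum. ring.
Qed.

Lemma regret_at_prior_convex f mu a1 b1 a2 b2 :
  0 <= a1 <= 1 -> 0 <= b1 <= 1 -> 0 <= a2 <= 1 -> 0 <= b2 <= 1 ->
  convex_01 (regret_at_prior f mu a1 b1 a2 b2).
Proof.
  intros Ha1 Hb1 Ha2 Hb2.
  apply convex_bsum; intros s1. apply convex_bsum; intros s2.
  apply pair_regret_convex; apply Rmult_le_pos; apply sprob_nonneg; assumption.
Qed.

Lemma regret_at_prior_continuous f mu a1 b1 a2 b2 m :
  0 <= a1 <= 1 -> 0 <= b1 <= 1 -> 0 <= a2 <= 1 -> 0 <= b2 <= 1 -> 0 < m < 1 ->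
  continuous (regret_at_prior f mu a1 b1 a2 b2) m.
Proof.
  intros Ha1 Hb1 Ha2 Hb2 Hm.
  assert (Hpair : forall s1 s2, continuous (pair_regret (sprob a1 b1 true s1 * sprob a2 b2 true s2)
            (sprob a1 b1 false s1 * sprob a2 b2 false s2)
            (f (posterior mu a1 b1 s1) (posterior mu a2 b2 s2))) m).
  { intros s1 s2. apply pair_regret_continuous; [apply Rmult_le_pos; apply sprob_nonneg..|];
      assumption. }
  unfold regret_at_prior, bsum.
  repeat apply (continuous_plus (V := R_NormedModule)); apply Hpair.
Qed.

Theorem mainTheorem3 (f : R -> R -> R)
  (hf : forall x y, 0 <= x <= 1 -> 0 <= y <= 1 -> 0 <= f x y <= 1)
  (mu a1 b1 a2 b2 : R)
  (hmu : 0 < mu < 1)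
  (ha1 : 0 <= a1 <= 1) (hb1 : 0 <= b1 <= 1)
  (ha2 : 0 <= a2 <= 1) (hb2 : 0 <= b2 <= 1) :
  single_troughed_0_1 (phi f mu a1 b1 a2 b2).
Proof.
  set (G := regret_at_prior f mu a1 b1 a2 b2).
  assert (HG := regret_at_prior_convex f mu a1 b1 a2 b2 ha1 hb1 ha2 hb2).
  assert (Hphi : forall l, 0 < l -> phi f mu a1 b1 a2 b2 l = G (u_map mu l))
    by (intros; apply phi_u_map; assumption).
  apply single_troughed_of_quasiconvex_continuous.
  - intros x y z Hx Hxy Hyz Hz. rewrite !Hphi by lra.
    assert (Hux := u_map_range mu x). assert (Huz := u_map_range mu z).
    destruct (u_map_monotone mu) as [Hu | Hu]; [|rewrite Rmax_comm];
      apply (convex_le_Rmax G); try exact HG; try lra; split; apply Hu; lra.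
  - intros c Hc. apply continuous_ext_loc with (fun l => G (u_map mu l)).
    + exists (mkposreal c (proj1 Hc)). intros l Hl. change (Rabs (l - c) < c) in Hl.
      apply Rabs_def2 in Hl. symmetry; apply Hphi; lra.
    + apply continuous_comp; [apply u_map_continuous; lra|].
      apply regret_at_prior_continuous; try assumption. apply u_map_range.
Qed.
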